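(* Let $(R,\mathfrak m)$ be a Noetherian local ring, let $I\subseteq R$ be an ideal and let $J=(f_1,\ldots,f_t)\subseteq I$ with $\nu_I(f_i)=1$ for $i=1,\ldots,t$. Consider the complex of graded $\mathrm{gr}_I(R)$-modules $$0\to \mathrm{gr}(\mathcal Z)\xrightarrow{\mathrm{gr}(i)}\mathrm{gr}(R^t)\xrightarrow{\mathrm{gr}(\mathfrak f)}\mathrm{gr}_I(R)\xrightarrow{\mathrm{gr}(\pi)}\mathrm{gr}_{I/J}(R/J)\to 0 \qquad ( * )$$ described in the context. The following are equivalent: (a) the natural surjection $\mathcal A_{R/J}(I/J)\to \mathcal R_{R/J}(I/J)$ is an isomorphism, i.e. $J\cap I^n=JI^{n-1}$ for all $n\ge 1$; (b) the complex $( * )$ is exact; (c) there exists a homogeneous system of generators of $\mathrm{Syz}(f_1^*,\ldots,f_t^* )$ each of whose elements is of the form $(\varphi\circ\psi)(a)$ for some $a\in\mathcal Z$.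
   Context: For $f\in R$, $\nu_I(f)$ is the largest $n$ with $f\in I^n$ ($\infty$ if none), and $f^*$ is the class of $f$ in $I^{\nu_I(f)}/I^{\nu_I(f)+1}\subseteq \mathrm{gr}_I(R)=\bigoplus_{n\ge0}I^n/I^{n+1}$ (with $f^*=0$ if $\nu_I(f)=\infty$). The Aluffi algebra is $\mathcal A_{R/J}(I/J)=\bigoplus_{n\ge0}I^n/JI^{n-1}$ (with $I^0=R$, $JI^{-1}:=J$ in degree 0), the Rees algebra is $\mathcal R_{R/J}(I/J)=\bigoplus_{n\ge0}I^n/(J\cap I^n)$, and the natural surjection is induced by identity on $I^n$. Let $\mathfrak f:R^t\to R$, $(a_1,\ldots,a_t)\mapsto\sum a_if_i$, let $\mathcal Z=\ker\mathfrak f$ (first syzygy module of $f_1,\dots,f_t$), $i:\mathcal Z\hookrightarrow R^t$ the inclusion and $\pi:R\to R/J$ the projection. Filter $R$ by $I^n$, $R^t$ by $F_nR^t=(I^{n-1})^{\oplus t}$ (with $I^{m}=R$ for $m\le 0$), $\mathcal Z$ by $F_n\mathcal Z=\mathcal Z\cap F_nR^t$, and $R/J$ by $(I/J)^n$. The associated graded modules are $\mathrm{gr}(M)=\bigoplus_n F_nM/F_{n+1}M$; $\mathrm{gr}(R^t)\cong\mathrm{gr}_I(R)(-1)^t$, $\mathrm{gr}(\mathfrak f)$ sends the $i$-th basis vector $e_i$ to $f_i^*$, $\mathrm{gr}(i)$ is induced by inclusion and $\mathrm{gr}(\pi)$ is the natural surjection. $\mathrm{Syz}(f_1^*,\dots,f_t^*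 )=\ker \mathrm{gr}(\mathfrak f)$. For $0\neq a=(a_1,\ldots,a_t)\in\mathcal Z$ with $m-1=\min_j\nu_I(a_j)$, $\psi(a)$ is the class of $a$ in $F_m\mathcal Z/F_{m+1}\mathcal Z$, and $\varphi:\mathrm{gr}(\mathcal Z)\hookrightarrow \mathrm{Syz}(f_1^*,\ldots,f_t^* )$ is the canonical embedding, so that $(\varphi\circ\psi)(a)=(\overline{a_1},\ldots,\overline{a_t})$ with $\overline{a_i}$ the class of $a_i$ in $I^{m-1}/I^m$. *)

(* Ideals of a commutative ring are represented as
   Prop-valued predicates R -> Prop; R^t as functions 'I_t -> R. *)
From HB Require Import structures.
From mathcomp Require Import all_boot all_order all_algebra.
Set Implicit Arguments. Unset Strict Implicit. Unset Printing Implicit Defensive.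
Import Order.TTheory GRing.Theory Num.Theory.
Local Open Scope ring_scope.

Section Defs.
Variable R : comNzRingType.

Definition is_ideal (A : R -> Prop) : Prop :=
  [/\ A 0, (forall x y, A x -> A y -> A (x + y)) & (forall r x, A x -> A (r * x))].

Definition gen_ideal (t : nat) (f : 'I_t -> R) (x : R) : Prop :=
  exists c : 'I_t -> R, x = \sum_(i < t) c i * f i.

Definition prod_ideal (A B : R -> Prop) (x : R) : Prop :=
  exists s : seq (R * R),
    (forall p, p \in s -> A p.1 /\ B p.2) /\ x = \sum_(p <- s) p.1 * p.2.

Fixpoint ipow (I : R -> Prop) (n : nat) : R -> Prop :=
  match n with
  | 0%N => fun _ => True
  | n'.+1 => prod_ideal I (ipow I n')
  end.

Definition is_maximal_ideal (M : R -> Prop) : Prop :=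
  [/\ is_ideal M, ~ M 1 &
     forall A, is_ideal A -> (forall x, M x -> A x) ->
       (forall x, A x <-> M x) \/ A 1].

Definition local_ring : Prop :=
  exists M, is_maximal_ideal M /\
    forall M', is_maximal_ideal M' -> forall x, M' x <-> M x.

Definition noetherian_ring : Prop :=
  forall A, is_ideal A ->
    exists (k : nat) (g : 'I_k -> R), forall x, A x <-> gen_ideal g x.

Definition nu_eq (I : R -> Prop) (x : R) (n : nat) : Prop :=
  ipow I n x /\ ~ ipow I n.+1 x.

Variable t : nat.
Variable I : R -> Prop.
Variable f : 'I_t -> R.

Definition fmap (a : 'I_t -> R) : R := \sum_(i < t) a i * f i.
Definition syzZ (a : 'I_t -> R) : Prop := fmap a = 0.
(* F_n R^t = (I^(n-1))^t  (with I^(-1) = R: n.-1 is truncated) *)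
Definition FRt (n : nat) (a : 'I_t -> R) : Prop := forall i, ipow I n.-1 (a i).

Definition minnu (a : 'I_t -> R) (e : nat) : Prop :=
  (forall j, ipow I e (a j)) /\ exists j, ~ ipow I e.+1 (a j).

(* Degree-n exactness of the complex
   0 -> gr(Z) -> gr(R^t) -> gr_I(R) -> gr_{I/J}(R/J) -> 0,
   written on representatives (degree n piece of each module):
   gr(Z)_n = F_nZ/F_(n+1)Z, gr(R^t)_n = (I^(n-1)/I^n)^t, gr_I(R)_n = I^n/I^(n+1),
   gr_{I/J}(R/J)_n = (I/J)^n/(I/J)^(n+1) with (I/J)^n = (I^n + J)/J. *)
Definition exact_at_grZ (n : nat) : Prop :=
  forall a, syzZ a -> FRt n a ->
    (* gr(i)(class of a) = 0 *) FRt n.+1 a ->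
    (* class of a is zero in F_nZ/F_(n+1)Z *) syzZ a /\ FRt n.+1 a.

Definition exact_at_grRt (n : nat) : Prop :=
  forall b, FRt n b ->
    ((* gr(f)(class of b) = 0 in I^n/I^(n+1) *) ipow I n.+1 (fmap b) <->
     (* class of b is in the image of gr(i) *)
     exists a, [/\ syzZ a, FRt n a & FRt n.+1 (fun i => a i - b i)]).

Definition exact_at_grR (n : nat) : Prop :=
  forall x, ipow I n x ->
    ((* gr(pi)(class of x) = 0 *)
     (exists y j, [/\ ipow I n.+1 y, gen_ideal f j & x = y + j]) <->
     (* class of x is in the image of gr(f) *)
     exists b, FRt n b /\ ipow I n.+1 (x - fmap b)).

Definition exact_at_grRJ (n : nat) : Prop :=
  forall y, (exists x j, [/\ ipow I n x, gen_ideal f j & y = x + j]) ->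
    exists x, ipow I n x /\
      exists z j, [/\ ipow I n.+1 z, gen_ideal f j & y - x = z + j].

Definition complex_exact : Prop :=
  forall n, [/\ exact_at_grZ n, exact_at_grRt n, exact_at_grR n & exact_at_grRJ n].

(* (c): S is a set of elements a of Z, a <> 0, such that the homogeneous
   elements (phi o psi)(a) (of degree e+1 where e = min_j nu_I(a_j), with
   components the classes of a_j in I^e/I^(e+1)) generate Syz(f_1^star,...,f_t^star)
   as a gr_I(R)-module.  As the generators are homogeneous and Syz is graded,
   this means every homogeneous syzygy of degree d+1 (represented by b with
   b_i in I^d and sum b_i f_i in I^(d+2)) is a gr_I(R)-combination of them
   with homogeneous coefficients of degree d-e (classes of c in I^(d-e)). *)
Definition gr_syz_generated_by (S : ('I_t -> R) -> Prop) : Prop :=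
  (forall a, S a -> syzZ a /\ a <> (fun _ => 0)) /\
  forall (d : nat) (b : 'I_t -> R),
    (forall i, ipow I d (b i)) -> ipow I d.+2 (fmap b) ->
    exists (r : nat) (a : 'I_r -> 'I_t -> R) (e : 'I_r -> nat) (c : 'I_r -> R),
      (forall k, [/\ S (a k), minnu (a k) (e k), (e k <= d)%N & ipow I (d - e k) (c k)]) /\
      forall i, ipow I d.+1 (b i - \sum_(k < r) c k * a k i).

End Defs.

From HB Require Import structures.
From mathcomp Require Import all_boot all_order all_algebra.
From Stdlib Require Import Classical.
Import GRing.Theory.
Local Open Scope ring_scope.
Set Implicit Arguments. Unset Strict Implicit. Unset Printing Implicit Defensive.

(** All three conditions are equivalent to the lifting of homogeneous
    syzygies: whenever [b] lies in [F_n R^t] and [f(b)] already lies in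
    [I^(n+1)], the class of [b] in [gr(R^t)] is the initial form of a
    genuine syzygy.  Lifting is a step of the induction showing that [f] is
    strict for the filtrations, i.e. [J ∩ I^n = f((I^(n-1))^t) = J I^(n-1)],
    which is (a); conversely strictness at [n+1] produces the lift.  In the
    complex (b) lifting is exactness at [gr(R^t)] and strictness exactness
    at [gr_I(R)], the other two spots being exact for any [f]; and in (c),
    a lift is itself a generator of the required shape, while conversely a
    [gr_I(R)]-combination of initial forms of syzygies is the initial form
    of the corresponding combination of syzygies. *)

Section IdealTheory.
Variables (R : comNzRingType) (A : R -> Prop).
Hypothesis HA : is_ideal A.

Lemma ideal0 : A 0. Proof. by case: HA. Qed.

Lemma idealD x y : A x -> A y -> A (x + y).
Proof. by case: HA => _ HD _; apply: HD. Qed.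

Lemma idealMl r x : A x -> A (r * x).
Proof. by case: HA => _ _ HM; apply: HM. Qed.

Lemma idealN x : A x -> A (- x).
Proof. by rewrite -mulN1r; apply: idealMl. Qed.

Lemma idealB x y : A x -> A y -> A (x - y).
Proof. by move=> Hx Hy; apply: idealD => //; apply: idealN. Qed.

Lemma ideal_sum (T : Type) (s : seq T) (P : pred T) (F : T -> R) :
  (forall i, P i -> A (F i)) -> A (\sum_(i <- s | P i) F i).
Proof. exact: (big_ind A ideal0 idealD). Qed.

Lemma prod_ideal_ideal (B : R -> Prop) : is_ideal (prod_ideal A B).
Proof.
split.
- by exists [::]; rewrite big_nil.
- move=> x y [s1 [H1 ->]] [s2 [H2 ->]]; exists (s1 ++ s2); split; last by rewrite big_cat.
  by move=> p; rewrite mem_cat => /orP [] ?; [apply: H1 | apply: H2].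
- move=> r x [s [Hs ->]]; exists [seq (r * p.1, p.2) | p <- s]; split.
  + by move=> p /mapP [q /Hs [Hq1 Hq2] ->]; split => //; apply: idealMl.
  + by rewrite big_map big_distrr /=; apply: eq_bigr => p _; rewrite mulrA.
Qed.

End IdealTheory.

Section IdealPowers.
Variables (R : comNzRingType) (I : R -> Prop).
Hypothesis HI : is_ideal I.

Lemma ipow_ideal n : is_ideal (ipow I n).
Proof. by case: n => [|n] /=; [split | exact: prod_ideal_ideal]. Qed.

Lemma ipow1 x : I x -> ipow I 1 x.
Proof.
move=> Hx; exists [:: (x, 1)]; split; last by rewrite big_seq1 mulr1.
by move=> p; rewrite inE => /eqP ->.
Qed.

Lemma ipow_mul m n x y : ipow I m x -> ipow I n y -> ipow I (m + n) (x * y).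
Proof.
elim: m x => [|m IH] x Hx Hy; first by rewrite add0n; apply: idealMl => //; exact: ipow_ideal.
case: Hx => s [Hs ->]; exists [seq (p.1, p.2 * y) | p <- s]; split.
- by move=> p /mapP [q /Hs [Hq1 Hq2] ->]; split => //; apply: IH.
- by rewrite big_map big_distrl /=; apply: eq_bigr => p _; rewrite mulrA.
Qed.

Lemma ipowS_ipow n x : ipow I n.+1 x -> ipow I n x.
Proof.
case=> s [Hs ->]; rewrite big_seq; apply: ideal_sum => [|p /Hs [_ Hp]].
  exact: ipow_ideal.
by apply: idealMl => //; exact: ipow_ideal.
Qed.

Lemma ipow_le m n x : (m <= n)%N -> ipow I n x -> ipow I m x.
Proof.
move=> /subnK <-; elim: (n - m)%N => [|k IH] //= Hx.
by apply: IH; apply: ipowS_ipow.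
Qed.

End IdealPowers.

Section SyzygyLifting.
Variables (R : comNzRingType) (t : nat) (I : R -> Prop) (f : 'I_t -> R).
Hypotheses (HI : is_ideal I) (Hf : forall i, I (f i)).
Implicit Types a b : 'I_t -> R.

Lemma FRtS n b : FRt I n.+1 b -> FRt I n b.
Proof. by move=> Hb i; apply: ipow_le (leq_pred n) (Hb i). Qed.

Lemma FRtB n a b : FRt I n a -> FRt I n b -> FRt I n (fun i => a i - b i).
Proof. by move=> Ha Hb i; apply: idealB; [exact: ipow_ideal | exact: Ha | exact: Hb]. Qed.

Lemma fmapB a b : fmap f (fun i => a i - b i) = fmap f a - fmap f b.
Proof. by rewrite /fmap -sumrB; apply: eq_bigr => i _; rewrite mulrBl. Qed.

Lemma fmap0 : fmap f (fun _ => 0) = 0.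
Proof. by rewrite /fmap big1 // => i _; rewrite mul0r. Qed.

Lemma fmap_lincomb (r : nat) (c : 'I_r -> R) (a : 'I_r -> 'I_t -> R) :
  fmap f (fun i => \sum_(k < r) c k * a k i) = \sum_(k < r) c k * fmap f (a k).
Proof.
rewrite /fmap (eq_bigr (fun i => \sum_(k < r) c k * (a k i * f i))); last first.
  by move=> i _; rewrite mulr_suml; apply: eq_bigr => k _; rewrite mulrA.
by rewrite exchange_big; apply: eq_bigr => k _; rewrite mulr_sumr.
Qed.

Lemma fmap_FRt n b : FRt I n b -> ipow I n (fmap f b).
Proof.
case: n => [|n] // Hb; apply: ideal_sum => [|i _]; first exact: ipow_ideal.
by rewrite -addn1; apply: ipow_mul => //; apply: ipow1.
Qed.

Lemma prod_gen_idealP k x :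
  prod_ideal (gen_ideal f) (ipow I k) x <->
  exists b, (forall i, ipow I k (b i)) /\ x = fmap f b.
Proof.
split=> [[s [Hs ->]] | [b [Hb ->]]].
- elim: s Hs => [|p s IH] Hs.
    by exists (fun _ => 0); split=> [i|]; [exact: ideal0 (ipow_ideal HI k) | rewrite big_nil fmap0].
  have [[c Hc] Hp2] := Hs p (mem_head p s).
  rewrite big_cons; have [q Hq|b [Hb ->]] := IH; first by apply: Hs; rewrite inE Hq orbT.
  exists (fun i => c i * p.2 + b i); split.
  + by move=> i; apply: idealD; [exact: ipow_ideal | apply: idealMl; first exact: ipow_ideal |].
  + rewrite Hc /fmap mulr_suml -big_split /=; apply: eq_bigr => i _.
    by rewrite mulrDl mulrAC.
- exists [seq (f i, b i) | i <- index_enum 'I_t]; split.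
  + move=> p /mapP [i _ ->] /=; split => //.
    exists (fun j => (j == i)%:R); rewrite (bigD1 i) //= eqxx mul1r big1 ?addr0 //.
    by move=> j /negbTE ->; rewrite mul0r.
  + by rewrite big_map /fmap; apply: eq_bigr => i _ /=; rewrite mulrC.
Qed.

Lemma syz_congr_fmap_ipow n a b :
  syzZ f a -> FRt I n.+1 (fun i => a i - b i) -> ipow I n.+1 (fmap f b).
Proof.
move=> Ha Hab; have -> : fmap f b = - fmap f (fun i => a i - b i).
  by rewrite fmapB Ha sub0r opprK.
by apply: idealN; [exact: ipow_ideal | exact: fmap_FRt].
Qed.

Definition gen_cap_ipow_eq_prod : Prop :=
  forall n, (1 <= n)%N -> forall x,
    (gen_ideal f x /\ ipow I n x) <-> prod_ideal (gen_ideal f) (ipow I n.-1) x.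

Definition fmap_strict : Prop :=
  forall n x, gen_ideal f x -> ipow I n x -> exists b, FRt I n b /\ x = fmap f b.

Definition gr_syz_lift : Prop :=
  forall n b, FRt I n b -> ipow I n.+1 (fmap f b) ->
    exists a, [/\ syzZ f a, FRt I n a & FRt I n.+1 (fun i => a i - b i)].

Lemma gen_cap_ipow_eq_prod_strict : gen_cap_ipow_eq_prod <-> fmap_strict.
Proof.
split=> [Ha [|n] x [c ->] Hx | Hs n n_gt0 x].
- by exists c.
- have := (Ha n.+1 isT (fmap f c)).1 (conj (ex_intro _ c erefl) Hx).
  by case/prod_gen_idealP => b [Hb Hcb]; exists b.
- rewrite prod_gen_idealP; split=> [[Hx /(Hs n _ Hx)] | [b [Hb ->]]] //.
  by split; [exists b | apply: fmap_FRt].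
Qed.

Lemma strict_gr_syz_lift : fmap_strict -> gr_syz_lift.
Proof.
move=> Hs n b Hb Hfb; have [b' [Hb' Hbb']] := Hs n.+1 _ (ex_intro _ b erefl) Hfb.
exists (fun i => b i - b' i); split.
- by rewrite /syzZ fmapB -Hbb' subrr.
- by apply: FRtB => //; apply: FRtS.
- by move=> i; rewrite addrAC subrr add0r; apply: idealN; [exact: ipow_ideal | exact: Hb'].
Qed.

Lemma gr_syz_lift_strict : gr_syz_lift -> fmap_strict.
Proof.
move=> Hl n _ [c ->]; rewrite -/(fmap f c) => Hx.
suff: forall k, (k <= n)%N -> exists b, FRt I k b /\ fmap f c = fmap f b by apply.
elim=> [|k IH] Hk; first by exists c.
have [b [Hb Hcb]] := IH (ltnW Hk).
rewrite Hcb in Hx; have [a [Ha _ Hab]] := Hl k b Hb (ipow_le HI Hk Hx).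
exists (fun i => b i - a i); split; last by rewrite fmapB Ha subr0.
by move=> i; rewrite -opprB; apply: idealN; [exact: ipow_ideal | exact: Hab].
Qed.

Lemma complex_exact_gr_syz_lift : complex_exact I f <-> gr_syz_lift.
Proof.
split=> [Hex n b Hb Hfb | Hl n].
  by have [_ Hrt _ _] := Hex n; apply: (Hrt b Hb).1.
have Hs := gr_syz_lift_strict Hl.
split=> [a Ha _ Ha1 | b Hb | x Hx | _ [x [j [Hx Hj ->]]]] //.
- split=> [/(Hl n b Hb) // | [a [Ha _ Hab]]].
  exact: syz_congr_fmap_ipow Ha Hab.
- split=> [[y [j [Hy Hj Hxy]]] | [b [Hb Hxb]]].
  + have Hjn : ipow I n j.
      have -> : j = x - y by rewrite Hxy addrC addKr.
      by apply: idealB; [exact: ipow_ideal | | apply: ipowS_ipow].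
    have [b [Hb Hjb]] := Hs n j Hj Hjn.
    by exists b; rewrite Hxy -Hjb addrK.
  + exists (x - fmap f b), (fmap f b); split=> //; last by rewrite subrK.
    by exists b.
- exists x; split=> //; exists 0, j; split=> //; last by rewrite add0r addrC addKr.
  exact: ideal0 (ipow_ideal HI n.+1).
Qed.

Lemma gr_syz_lift_generated :
  gr_syz_lift -> gr_syz_generated_by I f (fun a => syzZ f a /\ a <> (fun _ => 0)).
Proof.
move=> Hl; split=> // d b Hb Hfb.
have [a [Ha Ha_d Hab]] := Hl d.+1 b Hb Hfb.
have Hba i : ipow I d.+1 (b i - a i).
  by rewrite -opprB; apply: idealN; [exact: ipow_ideal | exact: Hab].
(* Either [a] lies in [F_(d+2)], and then so does [b], or [a] has order
   exactly [d] and its initial form is the single generator needed. *)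
have [Hall | /not_all_ex_not [j Hj]] := classic (forall j, ipow I d.+1 (a j)).
  exists 0%N, (fun _ => a), (fun _ => d), (fun _ => 1); split=> [[] // | i].
  rewrite big_ord0 subr0 -(subrK (a i) (b i)).
  by apply: idealD; [exact: ipow_ideal | exact: Hba | exact: Hall].
exists 1%N, (fun _ => a), (fun _ => d), (fun _ => 1); split=> [k | i].
  split=> //; last by rewrite subnn.
    by split=> // Ha0; apply: Hj; rewrite Ha0; exact: ideal0 (ipow_ideal HI d.+1).
  by split=> //; exists j.
by rewrite big_ord1 mul1r.
Qed.

Lemma gr_syz_generated_lift S : gr_syz_generated_by I f S -> gr_syz_lift.
Proof.
case=> HS Hgen [|d] b Hb Hfb.
  by exists (fun _ => 0); split=> //; rewrite /syzZ fmap0.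
have [r [a [e [c [Hk Hbc]]]]] := Hgen d b Hb Hfb.
exists (fun i => \sum_(k < r) c k * a k i); split.
- rewrite /syzZ fmap_lincomb big1 // => k _.
  by have [/HS [-> _] _ _ _] := Hk k; rewrite mulr0.
- move=> i; apply: ideal_sum => [|k _]; first exact: ipow_ideal.
  have [_ [Ha_e _] Hle Hc] := Hk k; rewrite /= -(subnK Hle).
  exact: ipow_mul.
- by move=> i; rewrite -opprB; apply: idealN; [exact: ipow_ideal | exact: Hbc].
Qed.

End SyzygyLifting.

Theorem theorem1p4 (R : comNzRingType) (t : nat) (I : R -> Prop) (f : 'I_t -> R) :
  noetherian_ring R -> local_ring R ->
  is_ideal I ->
  (forall i, I (f i)) ->
  (forall i, nu_eq I (f i) 1) ->
  let cond_a := forall n : nat, (1 <= n)%N -> forall x,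
          (gen_ideal f x /\ ipow I n x) <-> prod_ideal (gen_ideal f) (ipow I n.-1) x in
  let cond_b := complex_exact I f in
  let cond_c := exists S, gr_syz_generated_by I f S in
  (cond_a <-> cond_b) /\ (cond_b <-> cond_c).
Proof.
move=> _ _ HI Hf _ cond_a cond_b cond_c.
have a_lift : cond_a <-> gr_syz_lift I f.
  apply: iff_trans (gen_cap_ipow_eq_prod_strict HI Hf) _.
  by split; [exact: strict_gr_syz_lift | exact: gr_syz_lift_strict].
have b_lift : cond_b <-> gr_syz_lift I f := complex_exact_gr_syz_lift HI Hf.
have c_lift : cond_c <-> gr_syz_lift I f.
  split=> [[S /(gr_syz_generated_lift HI)] // | /(gr_syz_lift_generated HI) Hgen].
  by exists (fun a => syzZ f a /\ a <> (fun _ => 0)).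
tauto.
Qed.
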